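(* Let $(L,[\cdot,\cdot],\{\cdot,\cdot,\cdot\},\alpha)$ be a Hom-Lie-Yamaguti algebra over a field $\mathbb{K}$. Then: (1) for every $f\in HomC^1(L,L)$, $\delta_I^2(\delta_I^1 f,\delta_{II}^1 f)=0$ and $\delta_{II}^2(\delta_{II}^1 f)=0$; (2) for every $f\in HomC^1(L,L)$, $d_I^2(\delta_I^1 f,\delta_{II}^1 f)=0$ and $d_{II}^2(\delta_I^1 f,\delta_{II}^1 f)=0$; (3) for every $(f,g)\in HomC^2(L,L)\times HomC^3(L,L)$, $\delta_I^3(\delta_I^2(f,g),\delta_{II}^2 g)=0$ and $\delta_{II}^3(\delta_{II}^2 g)=0$.
   Context: A Hom-Lie-Yamaguti algebra (HLYA) is a quadruple $(L,[\cdot,\cdot],\{\cdot,\cdot,\cdot\},\alpha)$ where $L$ is a vector space over a field $\mathbb{K}$, $[\cdot,\cdot]$ is a bilinear and $\{\cdot,\cdot,\cdot\}$ a trilinear operation on $L$ (written $[xy]$, $\{xyz\}$), and $\alpha:L\to L$ is linear, such that for all $x,y,z,u,v\in L$: $\alpha([xy])=[\alpha(x)\alpha(y)]$; $\alpha(\{xyz\})=\{\alpha(x)\alpha(y)\alpha(z)\}$; $[xx]=0$; $\{xxy\}=0$; $\circlearrowleft_{x,y,z}([[xy]\alpha(z)]+\{xyz\})=0$; $\circlearrowleft_{x,y,z}\{[xy]\alpha(z)\alpha(u)\}=0$; $\{\alpha(x)\alpha(y)[uv]\}=[\{xyu\}\alpha^2(v)]+[\alpha^2(u)\{xyv\}]$;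 $\{\alpha^2(u)\alpha^2(v)\{xyz\}\}=\{\{uvx\}\alpha^2(y)\alpha^2(z)\}+\{\alpha^2(x)\{uvy\}\alpha^2(z)\}+\{\alpha^2(x)\alpha^2(y)\{uvz\}\}$. Here $\circlearrowleft_{x,y,z}$ denotes the sum over cyclic permutations of $x,y,z$. For $n\ge1$, $HomC^n(L,L)$ is the set of $n$-linear maps $f:L^n\to L$ such that $f(x_1,\dots,x_n)=0$ whenever $x_{2i-1}=x_{2i}$ for some $i$ (with $2i\le n$), and $f(\alpha(x_1),\dots,\alpha(x_n))=\alpha(f(x_1,\dots,x_n))$. Coboundary operators: For $f\in HomC^1(L,L)$: $\delta_I^1 f(x,y)=[xf(y)]+[f(x)y]-f([xy])$, $\delta_{II}^1 f(x,y,z)=\{f(x)yz\}+\{xf(y)z\}+\{xyf(z)\}-f(\{xyz\})$. For $f\in HomC^2(L,L)$, $g\in HomC^3(L,L)$: $\delta_I^2(f,g)(x,y,z,u)=\{\alpha(x)\alpha(y)f(z,u)\}-f(\{xyz\},\alpha^2(u))-f(\alpha^2(z),\{xyu\})+g(\alpha(x),\alpha(y),[zu])-[\alpha^2(z)g(x,y,u)]-[g(x,y,z)\alpha^2(u)]$; $\delta_{II}^2 g(x,y,u,v,w)=\{\alpha^2(x)\alpha^2(y)g(u,v,w)\}-\{g(x,y,u)\alpha^2(v)\alpha^2(w)\}-\{\alpha^2(u)g(x,y,v)\alpha^2(w)\}-\{\alpha^2(u)\alpha^2(v)g(x,y,w)\}+g(\alpha^2(x),\alpha^2(y),\{uvw\})-g(\{xyu\},\alpha^2(v),\alpha^2(w))-g(\alpha^2(u),\{xyv\},\alpha^2(w))-g(\alpha^2(u),\alpha^2(v),\{xyw\})$;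 $d_I^2(f,g)(x,y,z)=\circlearrowleft_{x,y,z}\big([f(x,y)\alpha(z)]+f([xy],\alpha(z))+g(x,y,z)\big)$; $d_{II}^2(f,g)(x,y,z,u)=\circlearrowleft_{x,y,z}\big(\{f(x,y)\alpha(z)\alpha(u)\}+g([xy],\alpha(z),\alpha(u))\big)$. For $f\in HomC^4(L,L)$, $g\in HomC^5(L,L)$: $\delta_I^3(f,g)(x_1,\dots,x_6)=\{\alpha^3(x_1)\alpha^3(x_2)f(x_3,x_4,x_5,x_6)\}-\{\alpha^3(x_3)\alpha^3(x_4)f(x_1,x_2,x_5,x_6)\}+\sum_{k=1}^2\sum_{i=2k+1}^6(-1)^k f(\alpha^2(x_1),\dots,\widehat{\alpha^2(x_{2k-1})},\widehat{\alpha^2(x_{2k})},\dots,\{x_{2k-1}x_{2k}x_i\},\dots,\alpha^2(x_6))-g(\alpha(x_1),\dots,\alpha(x_4),[x_5x_6])+[\alpha^4(x_5)g(x_1,\dots,x_4,x_6)]+[g(x_1,\dots,x_5)\alpha^4(x_6)]$, $\delta_{II}^3 g(x_1,\dots,x_7)=\sum_{k=1}^3(-1)^{k+1}\{\alpha^4(x_{2k-1})\alpha^4(x_{2k})g(x_1,\dots,\widehat{x_{2k-1}},\widehat{x_{2k}},\dots,x_7)\}+\sum_{k=1}^3\sum_{i=2k+1}^7(-1)^k g(\alpha^2(x_1),\dots,\widehat{\alpha^2(x_{2k-1})},\widehat{\alpha^2(x_{2k})},\dots,\{x_{2k-1}x_{2k}x_i\},\dots,\alpha^2(x_7))+\{g(x_1,\dots,x_5)\alpha^4(x_6)\alpha^4(x_7)\}-\{g(x_1,\dots,x_4,x_6)\alpha^4(x_5)\alpha^4(x_7)\}$.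 A hat means the entry is omitted; in the double sums the arguments are $\alpha^2(x_j)$ for all $j\notin\{2k-1,2k\}$ in increasing order, except that the entry in the position of $x_i$ is replaced by $\{x_{2k-1}x_{2k}x_i\}$. *)

From HB Require Import structures.
From mathcomp Require Import all_boot all_order all_algebra.
Set Implicit Arguments. Unset Strict Implicit. Unset Printing Implicit Defensive.
Import GRing.Theory.
Local Open Scope ring_scope.

Section HLYA.
Variables (K : fieldType) (L : lmodType K).
Variables (br : L -> L -> L) (tr : L -> L -> L -> L) (al : L -> L).

(* [x y] is [br x y], {x y z} is [tr x y z], alpha^n x is [iter n al x]. *)

Definition lin1 (f : L -> L) := forall (a : K) (x y : L), f (a *: x + y) = a *: f x + f y.

Definition ml2 (f : L -> L -> L) :=
  (forall y, lin1 (fun x => f x y)) /\ (forall x, lin1 (fun y => f x y)).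
Definition ml3 (f : L -> L -> L -> L) :=
  [/\ forall y z, lin1 (fun x => f x y z), forall x z, lin1 (fun y => f x y z)
    & forall x y, lin1 (fun z => f x y z)].
Definition ml4 (f : L -> L -> L -> L -> L) :=
  [/\ forall x2 x3 x4, lin1 (fun x1 => f x1 x2 x3 x4),
      forall x1 x3 x4, lin1 (fun x2 => f x1 x2 x3 x4),
      forall x1 x2 x4, lin1 (fun x3 => f x1 x2 x3 x4)
    & forall x1 x2 x3, lin1 (fun x4 => f x1 x2 x3 x4)].
Definition ml5 (f : L -> L -> L -> L -> L -> L) :=
  [/\ forall x2 x3 x4 x5, lin1 (fun x1 => f x1 x2 x3 x4 x5),
      forall x1 x3 x4 x5, lin1 (fun x2 => f x1 x2 x3 x4 x5),
      forall x1 x2 x4 x5, lin1 (fun x3 => f x1 x2 x3 x4 x5),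
      forall x1 x2 x3 x5, lin1 (fun x4 => f x1 x2 x3 x4 x5)
    & forall x1 x2 x3 x4, lin1 (fun x5 => f x1 x2 x3 x4 x5)].

Definition HLYA : Prop :=
  lin1 al /\ ml2 br /\ ml3 tr /\
  (forall x y, al (br x y) = br (al x) (al y)) /\
  (forall x y z, al (tr x y z) = tr (al x) (al y) (al z)) /\
  (forall x, br x x = 0) /\
  (forall x y, tr x x y = 0) /\
  (forall x y z,
      (br (br x y) (al z) + tr x y z) + (br (br y z) (al x) + tr y z x)
      + (br (br z x) (al y) + tr z x y) = 0) /\
  (forall x y z u,
      tr (br x y) (al z) (al u) + tr (br y z) (al x) (al u)
      + tr (br z x) (al y) (al u) = 0) /\
  (forall x y u v,
      tr (al x) (al y) (br u v)
      = br (tr x y u) (iter 2 al v) + br (iter 2 al u) (tr x y v)) /\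
  (forall x y z u v,
      tr (iter 2 al u) (iter 2 al v) (tr x y z)
      = tr (tr u v x) (iter 2 al y) (iter 2 al z)
        + tr (iter 2 al x) (tr u v y) (iter 2 al z)
        + tr (iter 2 al x) (iter 2 al y) (tr u v z)).

Definition HomC1 (f : L -> L) := lin1 f /\ (forall x, f (al x) = al (f x)).
Definition HomC2 (f : L -> L -> L) :=
  [/\ ml2 f, (forall x, f x x = 0) & (forall x y, f (al x) (al y) = al (f x y))].
Definition HomC3 (f : L -> L -> L -> L) :=
  [/\ ml3 f, (forall x y, f x x y = 0)
    & (forall x y z, f (al x) (al y) (al z) = al (f x y z))].
Definition HomC4 (f : L -> L -> L -> L -> L) :=
  [/\ ml4 f, (forall x y z, f x x y z = 0), (forall x y z, f x y z z = 0)
    & (forall x1 x2 x3 x4, f (al x1) (al x2) (al x3) (al x4) = al (f x1 x2 x3 x4))].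
Definition HomC5 (f : L -> L -> L -> L -> L -> L) :=
  [/\ ml5 f, (forall x y z w, f x x y z w = 0), (forall x y z w, f x y z z w = 0)
    & (forall x1 x2 x3 x4 x5,
        f (al x1) (al x2) (al x3) (al x4) (al x5) = al (f x1 x2 x3 x4 x5))].

Definition deltaI1 (f : L -> L) : L -> L -> L :=
  fun x y => br x (f y) + br (f x) y - f (br x y).
Definition deltaII1 (f : L -> L) : L -> L -> L -> L :=
  fun x y z => tr (f x) y z + tr x (f y) z + tr x y (f z) - f (tr x y z).

Definition deltaI2 (f : L -> L -> L) (g : L -> L -> L -> L) : L -> L -> L -> L -> L :=
  fun x y z u =>
    tr (al x) (al y) (f z u) - f (tr x y z) (iter 2 al u) - f (iter 2 al z) (tr x y u)
    + g (al x) (al y) (br z u) - br (iter 2 al z) (g x y u) - br (g x y z) (iter 2 al u).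

Definition deltaII2 (g : L -> L -> L -> L) : L -> L -> L -> L -> L -> L :=
  fun x y u v w =>
    tr (iter 2 al x) (iter 2 al y) (g u v w)
    - tr (g x y u) (iter 2 al v) (iter 2 al w)
    - tr (iter 2 al u) (g x y v) (iter 2 al w)
    - tr (iter 2 al u) (iter 2 al v) (g x y w)
    + g (iter 2 al x) (iter 2 al y) (tr u v w)
    - g (tr x y u) (iter 2 al v) (iter 2 al w)
    - g (iter 2 al u) (tr x y v) (iter 2 al w)
    - g (iter 2 al u) (iter 2 al v) (tr x y w).

Definition dI2 (f : L -> L -> L) (g : L -> L -> L -> L) : L -> L -> L -> L :=
  fun x y z =>
    (br (f x y) (al z) + f (br x y) (al z) + g x y z)
    + (br (f y z) (al x) + f (br y z) (al x) + g y z x)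
    + (br (f z x) (al y) + f (br z x) (al y) + g z x y).

Definition dII2 (f : L -> L -> L) (g : L -> L -> L -> L) : L -> L -> L -> L -> L :=
  fun x y z u =>
    (tr (f x y) (al z) (al u) + g (br x y) (al z) (al u))
    + (tr (f y z) (al x) (al u) + g (br y z) (al x) (al u))
    + (tr (f z x) (al y) (al u) + g (br z x) (al y) (al u)).

(* the double sums are written out explicitly:
   k = 1 (sign -1): i = 3..6 ;  k = 2 (sign +1): i = 5,6 *)
Definition deltaI3 (f : L -> L -> L -> L -> L) (g : L -> L -> L -> L -> L -> L)
  : L -> L -> L -> L -> L -> L -> L :=
  fun x1 x2 x3 x4 x5 x6 =>
    tr (iter 3 al x1) (iter 3 al x2) (f x3 x4 x5 x6)
    - tr (iter 3 al x3) (iter 3 al x4) (f x1 x2 x5 x6)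
    - f (tr x1 x2 x3) (iter 2 al x4) (iter 2 al x5) (iter 2 al x6)
    - f (iter 2 al x3) (tr x1 x2 x4) (iter 2 al x5) (iter 2 al x6)
    - f (iter 2 al x3) (iter 2 al x4) (tr x1 x2 x5) (iter 2 al x6)
    - f (iter 2 al x3) (iter 2 al x4) (iter 2 al x5) (tr x1 x2 x6)
    + f (iter 2 al x1) (iter 2 al x2) (tr x3 x4 x5) (iter 2 al x6)
    + f (iter 2 al x1) (iter 2 al x2) (iter 2 al x5) (tr x3 x4 x6)
    - g (al x1) (al x2) (al x3) (al x4) (br x5 x6)
    + br (iter 4 al x5) (g x1 x2 x3 x4 x6)
    + br (g x1 x2 x3 x4 x5) (iter 4 al x6).

(* first sum: k = 1,2,3 with signs +,-,+ ;
   double sum: k = 1 (sign -1): i = 3..7 ; k = 2 (sign +1): i = 5..7 ;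
   k = 3 (sign -1): i = 7 *)
Definition deltaII3 (g : L -> L -> L -> L -> L -> L)
  : L -> L -> L -> L -> L -> L -> L -> L :=
  fun x1 x2 x3 x4 x5 x6 x7 =>
    tr (iter 4 al x1) (iter 4 al x2) (g x3 x4 x5 x6 x7)
    - tr (iter 4 al x3) (iter 4 al x4) (g x1 x2 x5 x6 x7)
    + tr (iter 4 al x5) (iter 4 al x6) (g x1 x2 x3 x4 x7)
    - g (tr x1 x2 x3) (iter 2 al x4) (iter 2 al x5) (iter 2 al x6) (iter 2 al x7)
    - g (iter 2 al x3) (tr x1 x2 x4) (iter 2 al x5) (iter 2 al x6) (iter 2 al x7)
    - g (iter 2 al x3) (iter 2 al x4) (tr x1 x2 x5) (iter 2 al x6) (iter 2 al x7)
    - g (iter 2 al x3) (iter 2 al x4) (iter 2 al x5) (tr x1 x2 x6) (iter 2 al x7)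
    - g (iter 2 al x3) (iter 2 al x4) (iter 2 al x5) (iter 2 al x6) (tr x1 x2 x7)
    + g (iter 2 al x1) (iter 2 al x2) (tr x3 x4 x5) (iter 2 al x6) (iter 2 al x7)
    + g (iter 2 al x1) (iter 2 al x2) (iter 2 al x5) (tr x3 x4 x6) (iter 2 al x7)
    + g (iter 2 al x1) (iter 2 al x2) (iter 2 al x5) (iter 2 al x6) (tr x3 x4 x7)
    - g (iter 2 al x1) (iter 2 al x2) (iter 2 al x3) (iter 2 al x4) (tr x5 x6 x7)
    + tr (g x1 x2 x3 x4 x5) (iter 4 al x6) (iter 4 al x7)
    - tr (g x1 x2 x3 x4 x6) (iter 4 al x5) (iter 4 al x7).

End HLYA.

(* Every identity is linear in the cochains. After expanding all operations by
   multilinearity and pushing alpha inwards, its left-hand side is a signed sum of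
   instances of the fundamental identities of the algebra, with a cochain inserted
   into one argument or applied to the whole identity: the cyclic identities for
   d_I^2 and d_II^2, the derivation rule of {x y _} over [_ _] for delta_I^2, the
   derivation rule of {u v _} over {_ _ _} for delta_II^2 and delta_II^3, and both
   for delta_I^3.  What remains is skew-symmetry and the abelian group law. *)
From HB Require Import structures.
From mathcomp Require Import all_boot all_order all_algebra ring.
Set Implicit Arguments. Unset Strict Implicit.
Import GRing.Theory.
Local Open Scope ring_scope.

(* [ring] only normalises in commutative rings: embedding V as the square-zero
   ideal of the trivial extension int x V lets it decide identities in V. *)
Section TrivialExtension.
Variable V : zmodType.

Definition triv_ext := (int * V)%type.
HB.instance Definition _ := GRing.Zmodule.on triv_ext.

Definition triv_ext_one : triv_ext := (1, 0).
Definition triv_ext_mul (a b : triv_ext) : triv_ext :=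
  (a.1 * b.1, a.2 *~ b.1 + b.2 *~ a.1).

Lemma triv_ext_mulA : associative triv_ext_mul.
Proof.
move=> [a x] [b y] [c z]; congr pair; first by rewrite /= mulrA.
by rewrite /= !mulrzDl -!mulrzA (mulrC c a) (mulrC b a) addrA.
Qed.

Lemma triv_ext_mulC : commutative triv_ext_mul.
Proof. by move=> [a x] [b y]; congr pair; [exact: mulrC | exact: addrC]. Qed.

Lemma triv_ext_mul1 : left_id triv_ext_one triv_ext_mul.
Proof. by move=> [a x]; congr pair; [exact: mul1r | rewrite /= mul0rz add0r]. Qed.

Lemma triv_ext_mulDl : left_distributive triv_ext_mul +%R.
Proof.
move=> [a x] [b y] [c z]; congr pair; first exact: mulrDl.
by rewrite /= mulrzDl mulrzDr addrACA.
Qed.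

HB.instance Definition _ := GRing.Zmodule_isComPzRing.Build triv_ext
  triv_ext_mulA triv_ext_mulC triv_ext_mul1 triv_ext_mulDl.

Definition triv_ext_in (x : V) : triv_ext := (0, x).

Lemma triv_ext_inD : {morph triv_ext_in : x y / x + y}.
Proof. by move=> x y; congr pair; rewrite /= addr0. Qed.

Lemma triv_ext_inN : {morph triv_ext_in : x / - x}.
Proof. by move=> x; congr pair; rewrite /= oppr0. Qed.

Lemma triv_ext_in0 : triv_ext_in 0 = 0.
Proof. by []. Qed.

Lemma triv_ext_in_inj : injective triv_ext_in.
Proof. by move=> x y [->]. Qed.

End TrivialExtension.

Ltac zmodule_ring :=
  apply: triv_ext_in_inj; rewrite ?(triv_ext_inD, triv_ext_inN, triv_ext_in0); ring.

Lemma eq0_via_add (V : zmodType) (P Q E : V) : P = Q -> E + (P - Q) = 0 -> E = 0.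
Proof. by move=> ->; rewrite subrr addr0. Qed.

Lemma eq0_via_sub (V : zmodType) (P Q E : V) : P = Q -> E - (P - Q) = 0 -> E = 0.
Proof. by move=> ->; rewrite subrr subr0. Qed.

(* If both [op a b ..] and [op b a ..] occur, the ring solver would treat them as
   unrelated atoms; rewrite the second into the opposite of the first. *)
Ltac identify_swapped op skew :=
  match goal with
  | |- context [op ?a ?b] =>
      tryif constr_eq a b then fail else
      match goal with |- context [op b a] => rewrite (skew b a) end
  end.

Ltac normalize rules identify := rewrite /= ?rules; repeat (identify; rewrite ?rules).

Section Multilinear.
Variables (K : fieldType) (L : lmodType K).

Lemma lin1D (f : L -> L) : lin1 f -> {morph f : x y / x + y}.
Proof. by move=> lin_f x y; have := lin_f 1 x y; rewrite !scale1r. Qed.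

Lemma lin10 (f : L -> L) : lin1 f -> f 0 = 0.
Proof. by move=> lin_f; apply: (@addrI _ (f 0)); rewrite -lin1D // !addr0. Qed.

Lemma lin1N (f : L -> L) : lin1 f -> {morph f : x / - x}.
Proof. by move=> lin_f x; apply: (@addrI _ (f x)); rewrite -lin1D // !subrr lin10. Qed.

Lemma lin1_linear (f : L -> L) : lin1 f ->
  (forall x y, f (x + y) = f x + f y) * (forall x, f (- x) = - f x) * (f 0 = 0).
Proof. by move=> lin_f; split; [split; [exact: lin1D | exact: lin1N] | exact: lin10]. Qed.

Lemma ml2_linear (f : L -> L -> L) : ml2 f ->
  (forall x y z, f (x + y) z = f x z + f y z) * (forall x y z, f x (y + z) = f x y + f x z)
  * (forall x y, f (- x) y = - f x y) * (forall x y, f x (- y) = - f x y)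
  * (forall y, f 0 y = 0) * (forall x, f x 0 = 0).
Proof.
case=> lin1 lin2; do 5?split=> *; rewrite ?(lin1D (lin1 _)) ?(lin1D (lin2 _))
  ?(lin1N (lin1 _)) ?(lin1N (lin2 _)) ?(lin10 (lin1 _)) ?(lin10 (lin2 _)) //.
Qed.

Lemma ml3_linear (f : L -> L -> L -> L) : ml3 f ->
  (forall x x' y z, f (x + x') y z = f x y z + f x' y z)
  * (forall x y y' z, f x (y + y') z = f x y z + f x y' z)
  * (forall x y z z', f x y (z + z') = f x y z + f x y z')
  * (forall x y z, f (- x) y z = - f x y z) * (forall x y z, f x (- y) z = - f x y z)
  * (forall x y z, f x y (- z) = - f x y z)
  * (forall y z, f 0 y z = 0) * (forall x z, f x 0 z = 0) * (forall x y, f x y 0 = 0).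
Proof.
case=> lin1 lin2 lin3; do 8?split=> *; rewrite ?(lin1D (lin1 _ _)) ?(lin1D (lin2 _ _))
  ?(lin1D (lin3 _ _)) ?(lin1N (lin1 _ _)) ?(lin1N (lin2 _ _)) ?(lin1N (lin3 _ _))
  ?(lin10 (lin1 _ _)) ?(lin10 (lin2 _ _)) ?(lin10 (lin3 _ _)) //.
Qed.

Lemma bilin_skew (b : L -> L -> L) :
  (forall y, lin1 (b^~ y)) -> (forall x, lin1 (b x)) -> (forall x, b x x = 0) ->
  forall x y, b x y = - b y x.
Proof.
move=> linl linr bxx x y; apply/eqP; rewrite -addr_eq0 -(bxx (x + y)).
by rewrite (lin1D (linl _)) !(lin1D (linr _)) !bxx add0r addr0.
Qed.

End Multilinear.

Section HLYAIdentities.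
Variables (K : fieldType) (L : lmodType K).
Variables (br : L -> L -> L) (tr : L -> L -> L -> L) (al : L -> L).
Hypothesis hL : HLYA br tr al.

Lemma al_lin : lin1 al. Proof. by case: hL. Qed.
Lemma br_ml : ml2 br. Proof. by case: hL => _ []. Qed.
Lemma tr_ml : ml3 tr. Proof. by case: hL => _ [_ []]. Qed.

Lemma al_br x y : al (br x y) = br (al x) (al y).
Proof. by case: hL => _ [_ [_ []]]. Qed.

Lemma al_tr x y z : al (tr x y z) = tr (al x) (al y) (al z).
Proof. by case: hL => _ [_ [_ [_ []]]]. Qed.

Lemma brxx x : br x x = 0.
Proof. by case: hL => _ [_ [_ [_ [_ []]]]]. Qed.

Lemma trxx x y : tr x x y = 0.
Proof. by case: hL => _ [_ [_ [_ [_ [_ []]]]]]. Qed.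

Lemma br_jacobi x y z :
  (br (br x y) (al z) + tr x y z) + (br (br y z) (al x) + tr y z x)
  + (br (br z x) (al y) + tr z x y) = 0.
Proof. by case: hL => _ [_ [_ [_ [_ [_ [_ []]]]]]]. Qed.

Lemma tr_jacobi x y z u :
  tr (br x y) (al z) (al u) + tr (br y z) (al x) (al u)
  + tr (br z x) (al y) (al u) = 0.
Proof. by case: hL => _ [_ [_ [_ [_ [_ [_ [_ []]]]]]]]. Qed.

Lemma tr_br_derivation x y u v :
  tr (al x) (al y) (br u v) = br (tr x y u) (iter 2 al v) + br (iter 2 al u) (tr x y v).
Proof. by case: hL => _ [_ [_ [_ [_ [_ [_ [_ [_ []]]]]]]]]. Qed.

Lemma tr_tr_derivation x y z u v :
  tr (iter 2 al u) (iter 2 al v) (tr x y z)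
  = tr (tr u v x) (iter 2 al y) (iter 2 al z) + tr (iter 2 al x) (tr u v y) (iter 2 al z)
    + tr (iter 2 al x) (iter 2 al y) (tr u v z).
Proof. by case: hL => _ [_ [_ [_ [_ [_ [_ [_ [_ []]]]]]]]]. Qed.

Lemma br_skew x y : br x y = - br y x.
Proof. by case: br_ml => linl linr; exact: (bilin_skew linl linr brxx). Qed.

Lemma tr_skew x y z : tr x y z = - tr y x z.
Proof.
case: tr_ml => lin1 lin2 _.
exact: (@bilin_skew _ _ (fun x y => tr x y z) (lin1^~ z) (lin2^~ z) (trxx^~ z)).
Qed.

Definition hlyaE :=
  (lin1_linear al_lin, ml2_linear br_ml, ml3_linear tr_ml, al_br, al_tr, brxx, trxx).

Section DegreeOne.
Variable f : L -> L.
Hypothesis hf : HomC1 al f.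

Lemma HomC1_al x : al (f x) = f (al x). Proof. by case: hf. Qed.

Definition HomC1E := (hlyaE, lin1_linear hf.1, HomC1_al).

Ltac normalize1 :=
  normalize HomC1E ltac:(first [identify_swapped br br_skew | identify_swapped tr tr_skew]).

Lemma deltaI2_delta1_eq0 x y z u :
  deltaI2 br tr al (deltaI1 br f) (deltaII1 tr f) x y z u = 0.
Proof.
rewrite /deltaI2 /deltaI1 /deltaII1.
apply: (eq0_via_sub (tr_br_derivation x y z (f u))).
apply: (eq0_via_add (tr_br_derivation x y u (f z))).
apply: (eq0_via_sub (congr1 f (tr_br_derivation x y u z))).
apply: (eq0_via_add (tr_br_derivation (f x) y u z)).
apply: (eq0_via_sub (tr_br_derivation (f y) x u z)).
by normalize1; zmodule_ring.
Qed.

Lemma deltaII2_deltaII1_eq0 x y u v w : deltaII2 tr al (deltaII1 tr f) x y u v w = 0.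
Proof.
rewrite /deltaII2 /deltaII1.
apply: (eq0_via_sub (tr_tr_derivation u v w (f x) y)).
apply: (eq0_via_add (tr_tr_derivation u v w (f y) x)).
apply: (eq0_via_sub (tr_tr_derivation u (f v) w x y)).
apply: (eq0_via_add (tr_tr_derivation v u (f w) x y)).
apply: (eq0_via_sub (congr1 f (tr_tr_derivation v u w x y))).
apply: (eq0_via_sub (tr_tr_derivation (f u) v w x y)).
by normalize1; zmodule_ring.
Qed.

Lemma dI2_delta1_eq0 x y z : dI2 br al (deltaI1 br f) (deltaII1 tr f) x y z = 0.
Proof.
rewrite /dI2 /deltaI1 /deltaII1.
apply: (eq0_via_add (br_jacobi x z (f y))).
apply: (eq0_via_sub (br_jacobi (f x) y z)).
apply: (eq0_via_sub (congr1 f (br_jacobi x z y))).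
apply: (eq0_via_sub (br_jacobi (f z) x y)).
by normalize1; zmodule_ring.
Qed.

Lemma dII2_delta1_eq0 x y z u : dII2 br tr al (deltaI1 br f) (deltaII1 tr f) x y z u = 0.
Proof.
rewrite /dII2 /deltaI1 /deltaII1.
apply: (eq0_via_add (tr_jacobi (f y) x z u)).
apply: (eq0_via_sub (tr_jacobi (f x) y z u)).
apply: (eq0_via_sub (tr_jacobi y z x (f u))).
apply: (eq0_via_add (congr1 f (tr_jacobi x y z u))).
apply: (eq0_via_sub (tr_jacobi x y (f z) u)).
by normalize1; zmodule_ring.
Qed.

End DegreeOne.

Section DegreeThree.
Variable g : L -> L -> L -> L.
Hypothesis hg : HomC3 al g.

Lemma HomC3_ml : ml3 g. Proof. by case: hg. Qed.

Lemma HomC3_al x y z : al (g x y z) = g (al x) (al y) (al z). Proof. by case: hg. Qed.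

Lemma HomC3_xx x y : g x x y = 0. Proof. by case: hg. Qed.

Lemma HomC3_skew x y z : g x y z = - g y x z.
Proof.
case: HomC3_ml => lin1 lin2 _.
exact: (@bilin_skew _ _ (fun x y => g x y z) (lin1^~ z) (lin2^~ z) (HomC3_xx^~ z)).
Qed.

Definition HomC3E := (hlyaE, ml3_linear HomC3_ml, HomC3_al, HomC3_xx).

Ltac normalize3 :=
  normalize HomC3E ltac:(first [identify_swapped br br_skew | identify_swapped tr tr_skew
                               | identify_swapped g HomC3_skew]).

Lemma deltaII3_deltaII2_eq0 x1 x2 x3 x4 x5 x6 x7 :
  deltaII3 tr al (deltaII2 tr al g) x1 x2 x3 x4 x5 x6 x7 = 0.
Proof.
rewrite /deltaII3 /deltaII2.
pose a2 := iter 2 al; pose a4 := iter 4 al.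
apply: (eq0_via_add (tr_tr_derivation (a2 x4) (a2 x3) (g x5 x6 x7) (a2 x1) (a2 x2))).
apply: (eq0_via_add (congr1 (fun w => g w (a4 x6) (a4 x7)) (tr_tr_derivation x3 x4 x5 x1 x2))).
apply: (eq0_via_sub (congr1 (fun w => g w (a4 x5) (a4 x7)) (tr_tr_derivation x3 x4 x6 x1 x2))).
apply: (eq0_via_add (congr1 (g (a4 x5) (a4 x6)) (tr_tr_derivation x3 x4 x7 x1 x2))).
apply: (eq0_via_add (tr_tr_derivation (a2 x5) (g x3 x4 x6) (a2 x7) (a2 x1) (a2 x2))).
apply: (eq0_via_add (tr_tr_derivation (a2 x5) (a2 x6) (g x3 x4 x7) (a2 x1) (a2 x2))).
apply: (eq0_via_sub (congr1 (g (a4 x3) (a4 x4)) (tr_tr_derivation x5 x6 x7 x1 x2))).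
apply: (eq0_via_sub (tr_tr_derivation (a2 x6) (g x3 x4 x5) (a2 x7) (a2 x1) (a2 x2))).
apply: (eq0_via_add (tr_tr_derivation (g x1 x2 x6) (a2 x5) (a2 x7) (a2 x3) (a2 x4))).
apply: (eq0_via_add (tr_tr_derivation (a2 x6) (a2 x5) (g x1 x2 x7) (a2 x3) (a2 x4))).
apply: (eq0_via_add (congr1 (g (a4 x1) (a4 x2)) (tr_tr_derivation x5 x6 x7 x3 x4))).
apply: (eq0_via_sub (tr_tr_derivation (g x1 x2 x5) (a2 x6) (a2 x7) (a2 x3) (a2 x4))).
apply: (eq0_via_sub (tr_tr_derivation (a2 x5) (a2 x6) (a2 x7) (g x1 x2 x3) (a2 x4))).
apply: (eq0_via_sub (tr_tr_derivation (a2 x6) (a2 x5) (a2 x7) (g x1 x2 x4) (a2 x3))).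
by rewrite {}/a2 {}/a4; normalize3; zmodule_ring.
Qed.

Section DegreeTwo.
Variable f : L -> L -> L.
Hypothesis hf : HomC2 al f.

Lemma HomC2_ml : ml2 f. Proof. by case: hf. Qed.

Lemma HomC2_al x y : al (f x y) = f (al x) (al y). Proof. by case: hf. Qed.

Lemma HomC2_xx x : f x x = 0. Proof. by case: hf. Qed.

Lemma HomC2_skew x y : f x y = - f y x.
Proof. by case: HomC2_ml => linl linr; exact: (bilin_skew linl linr HomC2_xx). Qed.

Definition HomC23E := (HomC3E, ml2_linear HomC2_ml, HomC2_al, HomC2_xx).

Ltac normalize23 :=
  normalize HomC23E ltac:(first [identify_swapped br br_skew | identify_swapped tr tr_skew
              | identify_swapped f HomC2_skew | identify_swapped g HomC3_skew]).

Lemma deltaI3_delta2_eq0 x1 x2 x3 x4 x5 x6 :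
  deltaI3 br tr al (deltaI2 br tr al f g) (deltaII2 tr al g) x1 x2 x3 x4 x5 x6 = 0.
Proof.
rewrite /deltaI3 /deltaI2 /deltaII2.
pose a2 := iter 2 al; pose a3 := iter 3 al; pose a4 := iter 4 al.
apply: (eq0_via_sub (tr_tr_derivation (al x3) (al x4) (f x5 x6) (al x1) (al x2))).
apply: (eq0_via_add (congr1 (f^~ (a4 x6)) (tr_tr_derivation x3 x4 x5 x1 x2))).
apply: (eq0_via_add (congr1 (f^~ (a4 x5)) (tr_tr_derivation x4 x3 x6 x1 x2))).
apply: (eq0_via_sub (congr1 (g (a3 x3) (a3 x4)) (tr_br_derivation x1 x2 x5 x6))).
apply: (eq0_via_sub (tr_br_derivation (a2 x1) (a2 x2) (g x3 x4 x6) (a2 x5))).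
apply: (eq0_via_add (tr_br_derivation (a2 x1) (a2 x2) (g x3 x4 x5) (a2 x6))).
apply: (eq0_via_add (congr1 (g (a3 x1) (a3 x2)) (tr_br_derivation x3 x4 x5 x6))).
apply: (eq0_via_add (tr_br_derivation (a2 x3) (a2 x4) (g x1 x2 x6) (a2 x5))).
apply: (eq0_via_sub (tr_br_derivation (a2 x3) (a2 x4) (g x1 x2 x5) (a2 x6))).
apply: (eq0_via_sub (tr_br_derivation (g x1 x2 x3) (a2 x4) (a2 x5) (a2 x6))).
apply: (eq0_via_add (tr_br_derivation (g x1 x2 x4) (a2 x3) (a2 x5) (a2 x6))).
by rewrite {}/a2 {}/a3 {}/a4; normalize23; zmodule_ring.
Qed.

End DegreeTwo.
End DegreeThree.
End HLYAIdentities.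

Theorem mainTheorem2 (K : fieldType) (L : lmodType K)
  (br : L -> L -> L) (tr : L -> L -> L -> L) (al : L -> L) :
  HLYA br tr al ->
  [/\
   (* (1) *)
   (forall f : L -> L, HomC1 al f ->
      (forall x y z u,
         deltaI2 br tr al (deltaI1 br f) (deltaII1 tr f) x y z u = 0) /\
      (forall x y u v w, deltaII2 tr al (deltaII1 tr f) x y u v w = 0)),
   (* (2) *)
   (forall f : L -> L, HomC1 al f ->
      (forall x y z, dI2 br al (deltaI1 br f) (deltaII1 tr f) x y z = 0) /\
      (forall x y z u, dII2 br tr al (deltaI1 br f) (deltaII1 tr f) x y z u = 0))
  & (* (3) *)
   (forall (f : L -> L -> L) (g : L -> L -> L -> L), HomC2 al f -> HomC3 al g ->
      (forall x1 x2 x3 x4 x5 x6,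
         deltaI3 br tr al (deltaI2 br tr al f g) (deltaII2 tr al g) x1 x2 x3 x4 x5 x6 = 0) /\
      (forall x1 x2 x3 x4 x5 x6 x7,
         deltaII3 tr al (deltaII2 tr al g) x1 x2 x3 x4 x5 x6 x7 = 0))].
Proof.
move=> hL; split=> [f hf | f hf | f g hf hg]; split.
- exact (deltaI2_delta1_eq0 hL hf).
- exact (deltaII2_deltaII1_eq0 hL hf).
- exact (dI2_delta1_eq0 hL hf).
- exact (dII2_delta1_eq0 hL hf).
- exact (deltaI3_delta2_eq0 hL hg hf).
- exact (deltaII3_deltaII2_eq0 hL hg).
Qed.
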